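(* In a finite dynamic game as described in the context, suppose $K^i$ is unilaterally sufficient information for player $i$, and let $j\neq i$ be another player. Then for every behavioral strategy profile $g$, every $t$, every $h_t^i\in\mathcal{H}_t^i$ with compression $k_t^i$, and every $h_t^j\in\mathcal{H}_t^j$, $$\Pr^g(h_t^i\mid h_t^j)=\Pr^g(h_t^i\mid k_t^i)\,\Pr^g(k_t^i\mid h_t^j),$$ whenever $\Pr^g(k_t^i)>0$ and $\Pr^g(h_t^j)>0$.
   Context: Game model: finite set of players $\mathcal{I}$, times $\mathcal{T}=\{1,\dots,T\}$. At time $t$ each player $i$ takes action $U_t^i\in\mathcal{U}_t^i$, obtains reward $R_t^i\in[-1,1]$ and learns new information $Z_t^i\in\mathcal{Z}_t^i$. There is a state $X_t\in\mathcal{X}_t$ with $(X_{t+1},Z_t,R_t)=f_t(X_t,U_t,W_t)$ for fixed functions $f_t$. Primitive random variables $(X_1,H_1)$ and $W_1,\dots,W_T$ are mutually independent with commonly known distributions. All sets are finite. Perfect recall: $H_t^i=(H_1^i,Z_{1:t-1}^i)\in\mathcal{H}_t^i$, and $U_t^i$ is a component of $Z_t^i$. Behavioral strategy $g_t^i:\mathcal{H}_t^i\to\Delta(\mathcal{U}_t^i)$. A realization is admissible under $g$ if it has positive probability under $g$. Compression: $K_1^i=\iota_1^i(H_1^i)$, $K_t^i=\iota_t^i(K_{t-1}^i,Z_{t-1}^i)$ for fixed maps, finite value sets $\mathcal{K}_t^i$; $k_t^i$ is the compression of $h_t^i$. Unilaterally sufficient information (USI): $K^i$ is USI for player $i$ if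 there exist $F_t^{i,g^i}:\mathcal{K}_t^i\to\Delta(\mathcal{H}_t^i)$ depending only on $g^i$ and $\Phi_t^{i,g^{-i}}:\mathcal{K}_t^i\to\Delta(\mathcal{X}_t\times\mathcal{H}_t^{-i})$ depending only on $g^{-i}$ with $\Pr^g(x_t,h_t\mid k_t^i)=F_t^{i,g^i}(h_t^i\mid k_t^i)\Phi_t^{i,g^{-i}}(x_t,h_t^{-i}\mid k_t^i)$ for all behavioral profiles $g$, all $t$, all $k_t^i$ admissible under $g$ (with $x_t,h_t^i,h_t^{-i}$ ranging independently; the left side is $0$ if they disagree on shared components). *)

From HB Require Import structures.
From mathcomp Require Import all_boot all_order all_algebra.
Set Implicit Arguments. Unset Strict Implicit. Unset Printing Implicit Defensive.
Import Order.TTheory GRing.Theory Num.Theory.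
Local Open Scope ring_scope.

Definition is_distr (R : realFieldType) (T : finType) (p : T -> R) :=
  (forall x, 0 <= p x) /\ \sum_(x : T) p x = 1.

Section Game.
Variable R : realFieldType.
Variable I : finType.
Variable X : nat -> finType.
Variable U : nat -> I -> finType.
Variable Y : nat -> I -> finType.           (* non-action part of Z_t^i *)
Variable H1 : I -> finType.
Variable W : nat -> finType.

(* New information Z_t^i = (U_t^i, Y_t^i): the own action is a component. *)
Definition Z t i : finType := Finite.clone (U t i * Y t i)%type _.

(* Perfect recall: H_{t+1}^i = (H_t^i, Z_t^i), i.e. H_t^i = (H_1^i, Z_{1:t-1}^i). *)
Fixpoint Hist (i : I) (t : nat) : finType :=
  match t with
  | 0 => H1 i
  | t'.+1 => Finite.clone (Hist i t' * Z t' i)%type _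
  end.

Definition JU t : finType := Finite.clone {dffun forall i : I, U t i} _.
Definition JY t : finType := Finite.clone {dffun forall i : I, Y t i} _.
Definition JH t : finType := Finite.clone {dffun forall i : I, Hist i t} _.

Definition strategy (i : I) := forall t, Hist i t -> U t i -> R.
Definition profile := forall i : I, strategy i.
Definition is_strategy (i : I) (gi : strategy i) :=
  forall t (h : Hist i t), is_distr (gi t h).
Definition is_profile (g : profile) := forall i, is_strategy (g i).

Definition prevH t (h : JH t.+1) : JH t := [ffun i => (h i).1].
Definition actH t (h : JH t.+1) : JU t := [ffun i => (h i).2.1].
Definition obsH t (h : JH t.+1) : JY t := [ffun i => (h i).2.2].

(* dynamics (X_{t+1}, Z_t) = f_t(X_t, U_t, W_t) (rewards omitted) *)
Variable f : forall t, X t -> JU t -> W t -> (X t.+1 * JY t)%type.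
(* law of (X_1, H_1) and of W_t, mutually independent *)
Variable P0 : X 0%N -> JH 0%N -> R.
Variable PW : forall t, W t -> R.

Fixpoint Pjoint (g : profile) (t : nat) : X t -> JH t -> R :=
  match t with
  | 0 => P0
  | t'.+1 => fun x h =>
      \sum_(x0 : X t') \sum_(w : W t')
        Pjoint g x0 (prevH h)
        * (\prod_(i : I) g i t' (h i).1 (h i).2.1)
        * PW w
        * ((f x0 (actH h) w == (x, obsH h)) %:R)
  end.

Definition PrE (g : profile) t (E : X t -> JH t -> bool) : R :=
  \sum_(x : X t) \sum_(h : JH t) (E x h)%:R * Pjoint g x h.

Definition condPr (g : profile) t (A B : X t -> JH t -> bool) : R :=
  PrE g (fun x h => A x h && B x h) / PrE g B.

Section Compression.
Variable i0 : I.
Variable K : nat -> finType.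
Variable iota1 : H1 i0 -> K 0%N.
Variable iota : forall t, K t -> Z t i0 -> K t.+1.

Fixpoint compress (t : nat) : Hist i0 t -> K t :=
  match t with
  | 0 => iota1
  | t'.+1 => fun h => iota (compress h.1) h.2
  end.

Definition OHist t : finType :=
  Finite.clone {dffun forall j : {j : I | j != i0}, Hist (val j) t} _.
Definition restrH t (h : JH t) : OHist t := finfun (fun j => h (val j)).

(* Unilaterally sufficient information for player i0 (times 0 .. T-1). *)
Definition USI (T : nat) : Prop :=
  exists (F : strategy i0 -> forall t, K t -> Hist i0 t -> R)
         (Phi : profile -> forall t, K t -> X t -> OHist t -> R),
    (forall gi, is_strategy gi -> forall t (k : K t), is_distr (F gi t k)) /\
    (forall g, is_profile g -> forall t (k : K t),
        is_distr (fun p : (X t * OHist t)%type => Phi g t k p.1 p.2)) /\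
    (forall g g', (forall j, j != i0 -> forall t h u, g j t h u = g' j t h u) ->
        forall t k x o, Phi g t k x o = Phi g' t k x o) /\
    (forall g, is_profile g -> forall t, (t < T)%N -> forall k : K t,
        0 < PrE g (fun _ h => compress (h i0) == k) ->
        forall (x : X t) (h : JH t),
          condPr g (fun x' h' => (x' == x) && (h' == h))
                   (fun _ h' => compress (h' i0) == k)
          = F (g i0) t k (h i0) * Phi g t k x (restrH h)).
End Compression.
End Game.

(* Conditionally on the compression k, USI says that the joint law of
   (state, histories) is a product F(h^i) Phi(x, h^-i).  In a product law any
   event on h^i is independent of any event on (x, h^-i) (exchanging the
   i-th coordinates of two independent copies preserves the product weight),
   so h^i and h^j are independent given k.  Since the event {h^i = hi} is
   contained in {compression = k}, this conditional independence is exactly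
   the chain rule Pr(hi | hj) = Pr(hi | k) Pr(k | hj). *)
From mathcomp Require Import all_boot all_order all_algebra.
From mathcomp Require Import ring.
Import Order.TTheory GRing.Theory Num.Theory.
Local Open Scope ring_scope.
Set Implicit Arguments.
Unset Strict Implicit.

Section DffunWith.
Variables (I : finType) (T : I -> finType) (i : I).

Definition dffun_with (h : {dffun forall l, T l}) (a : T i) : {dffun forall l, T l} :=
  finfun (dfwith (fun l => h l) a).

Lemma dffun_with_in h a : dffun_with h a i = a.
Proof. by rewrite ffunE dfwith_in. Qed.

Lemma dffun_with_out h a l : i != l -> dffun_with h a l = h l.
Proof. by move=> il; rewrite ffunE dfwith_out. Qed.

Lemma dffun_with_with h a b : dffun_with (dffun_with h a) b = dffun_with h b.
Proof.
apply/ffunP => l; rewrite !ffunE; case: (dfwithP (fun l => h l) b l) => [|l0 il].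
  by rewrite dfwith_in.
by rewrite dfwith_out // dffun_with_out.
Qed.

Lemma dffun_with_id h : dffun_with h (h i) = h.
Proof. by apply/ffunP => l; rewrite ffunE; case: dfwithP. Qed.

End DffunWith.

Section Mass.
Variables (R : fieldType) (A B : finType).

Definition mass (mu : A -> B -> R) (E : A -> B -> bool) : R :=
  \sum_a \sum_b (E a b)%:R * mu a b.

Definition cond (mu : A -> B -> R) (E C : A -> B -> bool) : R :=
  mass mu (fun a b => E a b && C a b) / mass mu C.

Lemma mass_pairE mu E : mass mu E = \sum_(p : A * B) (E p.1 p.2)%:R * mu p.1 p.2.
Proof. exact: pair_bigA. Qed.

Lemma mass_point mu C a0 b0 :
  mass mu (fun a b => (a == a0) && (b == b0) && C a b) = (C a0 b0)%:R * mu a0 b0.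
Proof.
rewrite /mass (bigD1 a0) //= [X in _ + X]big1 => [|a /negbTE a_a0]; last first.
  by apply: big1 => b _; rewrite a_a0 mul0r.
rewrite addr0 (bigD1 b0) //= [X in _ + X]big1 => [|b /negbTE b_b0].
  by rewrite !eqxx addr0.
by rewrite b_b0 andbF mul0r.
Qed.

Lemma cond_law mu C (nu : A -> B -> R) :
    (forall a b, cond mu (fun a' b' => (a' == a) && (b' == b)) C = nu a b) ->
  forall E, cond mu E C = mass nu E.
Proof.
move=> law E; rewrite /cond /mass mulr_suml; apply: eq_bigr => a _.
rewrite mulr_suml; apply: eq_bigr => b _.
by rewrite -law /cond mass_point -mulnb natrM !mulrA.
Qed.

Lemma cond_predT mu C : mass mu C != 0 -> cond mu (fun _ _ => true) C = 1.
Proof. exact: divff. Qed.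

Lemma cond_chain mu (E F C : A -> B -> bool) :
    (forall a b, E a b -> C a b) -> mass mu C != 0 ->
    cond mu (fun a b => E a b && F a b) C = cond mu E C * cond mu F C ->
  cond mu E F = cond mu E C * cond mu C F.
Proof.
move=> EC C0; rewrite /cond.
have -> : mass mu (fun a b => E a b && F a b && C a b)
        = mass mu (fun a b => E a b && F a b).
  apply: eq_bigr => a _; apply: eq_bigr => b _.
  by case Eab: (E a b) => //=; rewrite EC // andbT.
have -> : mass mu (fun a b => C a b && F a b) = mass mu (fun a b => F a b && C a b).
  by apply: eq_bigr => a _; apply: eq_bigr => b _; rewrite andbC.
by move=> /(canRL (divfK C0)) ->; rewrite !mulrA divfK.
Qed.

End Mass.

Section ProductWeight.
Variables (R : fieldType) (I : finType) (T : I -> finType) (i : I) (A : finType).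
Local Notation D := {dffun forall l, T l}.

Lemma sum_mul_swap (u v : A * D -> R) :
  (\sum_p u p) * (\sum_q v q)
  = \sum_(p : A * D) \sum_(q : A * D)
      u (q.1, dffun_with q.2 (p.2 i)) * v (p.1, dffun_with p.2 (q.2 i)).
Proof.
pose tau (pq : (A * D) * (A * D)) :=
  ((pq.2.1, dffun_with pq.2.2 (pq.1.2 i)), (pq.1.1, dffun_with pq.1.2 (pq.2.2 i))).
have tauK : involutive tau.
  by case=> [[a h] [b h']]; rewrite /tau /= !dffun_with_in !dffun_with_with !dffun_with_id.
rewrite mulr_suml; under eq_bigr do rewrite mulr_sumr.
by rewrite !pair_bigA (reindex_inj (inv_inj tauK)).
Qed.

Variables (alpha : T i -> R) (beta : A -> D -> R).
Hypothesis beta_with : forall a h (c : T i), beta a (dffun_with h c) = beta a h.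
Local Notation nu := (fun a (h : D) => alpha (h i) * beta a h).

Lemma mass_prod_indep (E1 : pred (T i)) (E2 : A -> D -> bool) :
    (forall a h (c : T i), E2 a (dffun_with h c) = E2 a h) ->
  mass nu (fun a h => E1 (h i) && E2 a h) * mass nu (fun _ _ => true)
  = mass nu (fun _ h => E1 (h i)) * mass nu E2.
Proof.
move=> E2_with; rewrite !mass_pairE [RHS]sum_mul_swap mulr_suml.
apply: eq_bigr => p _; rewrite mulr_sumr; apply: eq_bigr => q _.
by rewrite /= !dffun_with_in !beta_with E2_with -mulnb natrM; ring.
Qed.

Lemma cond_prod_indep (mu : A -> D -> R) C (E1 : pred (T i)) (E2 : A -> D -> bool) :
    mass mu C != 0 ->
    (forall a h, cond mu (fun a' h' => (a' == a) && (h' == h)) C = nu a h) ->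
    (forall a h (c : T i), E2 a (dffun_with h c) = E2 a h) ->
  cond mu (fun a h => E1 (h i) && E2 a h) C
  = cond mu (fun _ h => E1 (h i)) C * cond mu E2 C.
Proof.
move=> C0 law E2_with; rewrite !(cond_law law).
have nu1 : mass nu (fun _ _ => true) = 1 by rewrite -(cond_law law) cond_predT.
by rewrite -[LHS]mulr1 -nu1 mass_prod_indep.
Qed.

End ProductWeight.

Lemma restrH_with (I : finType) (U Y : nat -> I -> finType) (H1 : I -> finType)
    (i : I) (t : nat) (h : JH U Y H1 t) (c : Hist U Y H1 i t) :
  restrH i (dffun_with h c) = restrH i h.
Proof.
by apply/ffunP => l; rewrite ffunE [RHS]ffunE dffun_with_out // eq_sym (valP l).
Qed.

Theorem lemma7
  (R : realFieldType) (I : finType) (T : nat)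
  (X : nat -> finType) (U Y : nat -> I -> finType) (H1 : I -> finType)
  (W : nat -> finType)
  (f : forall t, X t -> JU U t -> W t -> (X t.+1 * JY Y t)%type)
  (P0 : X 0%N -> JH U Y H1 0%N -> R) (PW : forall t, W t -> R)
  (hP0 : is_distr (fun p : (X 0%N * JH U Y H1 0%N)%type => P0 p.1 p.2))
  (hPW : forall t, is_distr (PW t))
  (i : I) (K : nat -> finType) (iota1 : H1 i -> K 0%N)
  (iota : forall t, K t -> Z U Y t i -> K t.+1)
  (husi : USI f P0 PW iota1 iota T)
  (j : I) (hji : j != i)
  (g : profile R U Y H1) (hg : is_profile g)
  (t : nat) (ht : (t < T)%N)
  (hi : Hist U Y H1 i t) (hj : Hist U Y H1 j t) :
  0 < PrE f P0 PW g (fun _ h => compress iota1 iota (h i) == compress iota1 iota hi) ->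
  0 < PrE f P0 PW g (fun _ h => h j == hj) ->
  condPr f P0 PW g (fun _ h => h i == hi) (fun _ h => h j == hj)
  = condPr f P0 PW g (fun _ h => h i == hi)
                     (fun _ h => compress iota1 iota (h i) == compress iota1 iota hi)
    * condPr f P0 PW g (fun _ h => compress iota1 iota (h i) == compress iota1 iota hi)
                       (fun _ h => h j == hj).
Proof.
move=> PrC_gt0 _.
case: husi => F [Phi [_ [_ [_ usi]]]].
set k := compress iota1 iota hi in PrC_gt0 *.
have law := usi g hg t ht k PrC_gt0.
have PrC_neq0 := lt0r_neq0 PrC_gt0.
apply: (cond_chain (mu := Pjoint f P0 PW g (t := t))
         (C := fun _ h => compress iota1 iota (h i) == k)) => //.
- by move=> _ h /eqP ->.
- apply: (cond_prod_indep (alpha := F (g i) t k)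
            (beta := fun x h => Phi g t k x (restrH i h)) _ (pred1 hi)) => //.
  + by move=> x h c; rewrite restrH_with.
  + by move=> x h c; rewrite dffun_with_out // eq_sym.
Qed.
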